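(* Let $\mathcal U=\{(\alpha,d): \alpha\in(0,1),\ d\in\mathcal D_\alpha\}$. Then $\mathcal U$ is a biconvex set (each slice $\{d:(\alpha,d)\in\mathcal U\}$ for fixed $\alpha$ and each slice $\{\alpha:(\alpha,d)\in\mathcal U\}$ for fixed $d$ is convex), $f_0^*>0$ on $\mathcal U$, and $\ln f_0^*$ is strictly biconcave on $\mathcal U$: for each fixed $\alpha$, $d\mapsto \ln f_0^*(\alpha,d)$ is strictly concave on its slice, and for each fixed $d$, $\alpha\mapsto \ln f_0^*(\alpha,d)$ is strictly concave on its slice.
   Context: All parameters $s_{\rm in},\gamma,\beta,\varphi_{\max},k_s,\rho_{\max},k_v,q_{\min},\mu_{\max}$ are strictly positive. $\varphi(s)=\frac{\varphi_{\max}s}{k_s+s}$, $\rho(v)=\frac{\rho_{\max}v}{k_v+v}$, $\mu(q)=\mu_{\max}(1-q_{\min}/q)$, with inverses $\varphi^{-1}:[0,\varphi_{\max})\to[0,\infty)$, $\mu^{-1}:[0,\mu_{\max})\to[q_{\min},\infty)$, $\rho^{-1}:[0,\rho_{\max})\to[0,\infty)$. $\psi_{\max}=\frac{\mu_{\max}\rho_{\max}}{\rho_{\max}+q_{\min}\mu_{\max}}$, $\psi^{-1}(y)=\rho^{-1}(y\,\mu^{-1}(y))$ for $y\in[0,\psi_{\max})$. For $\alpha\in(0,1)$: $\psi_\alpha^{-1}(d)=\varphi^{-1}(d/(1-\alpha))+\psi^{-1}(d)/(\alpha\beta\gamma)$ and $\mathcal{D}_\alpha=\{d\in(0,\min\{(1-\alpha)\varphi_{\max},\psi_{\max}\}):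 \psi_\alpha^{-1}(d)<s_{\rm in}\}$. $f_0^*(\alpha,d)=\frac{d\,(v_{\rm in}^*(\alpha,d)-\psi^{-1}(d))}{\mu^{-1}(d)}$ with $v_{\rm in}^*(\alpha,d)=\alpha\beta\gamma\big(s_{\rm in}-\varphi^{-1}(d/(1-\alpha))\big)$. *)

From Stdlib Require Import Reals Lra.
Open Scope R_scope.

Record params := Params {
  s_in : R; gam : R; bet : R; phi_max : R; k_s : R;
  rho_max : R; k_v : R; q_min : R; mu_max : R }.

Definition params_pos (p : params) : Prop :=
  0 < s_in p /\ 0 < gam p /\ 0 < bet p /\ 0 < phi_max p /\ 0 < k_s p /\
  0 < rho_max p /\ 0 < k_v p /\ 0 < q_min p /\ 0 < mu_max p.

Definition phi (p : params) (s : R) : R := phi_max p * s / (k_s p + s).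
Definition rho (p : params) (v : R) : R := rho_max p * v / (k_v p + v).
Definition mu  (p : params) (q : R) : R := mu_max p * (1 - q_min p / q).

(* Their inverses, written out explicitly:
   phi^{-1} : [0,phi_max) -> [0,oo),  y |-> k_s y / (phi_max - y)
   mu^{-1}  : [0,mu_max)  -> [q_min,oo), y |-> q_min mu_max / (mu_max - y)
   rho^{-1} : [0,rho_max) -> [0,oo),  y |-> k_v y / (rho_max - y) *)
Definition phi_inv (p : params) (y : R) : R := k_s p * y / (phi_max p - y).
Definition mu_inv  (p : params) (y : R) : R := q_min p * mu_max p / (mu_max p - y).
Definition rho_inv (p : params) (y : R) : R := k_v p * y / (rho_max p - y).

Definition psi_max (p : params) : R :=
  mu_max p * rho_max p / (rho_max p + q_min p * mu_max p).

Definition psi_inv (p : params) (y : R) : R := rho_inv p (y * mu_inv p y).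

Definition psi_alpha_inv (p : params) (a d : R) : R :=
  phi_inv p (d / (1 - a)) + psi_inv p d / (a * bet p * gam p).

Definition in_D (p : params) (a d : R) : Prop :=
  0 < d /\ d < Rmin ((1 - a) * phi_max p) (psi_max p) /\ psi_alpha_inv p a d < s_in p.

Definition in_U (p : params) (a d : R) : Prop := 0 < a < 1 /\ in_D p a d.

Definition v_in_star (p : params) (a d : R) : R :=
  a * bet p * gam p * (s_in p - phi_inv p (d / (1 - a))).

Definition f0_star (p : params) (a d : R) : R :=
  d * (v_in_star p a d - psi_inv p d) / mu_inv p d.

Definition convex_set (S : R -> Prop) : Prop :=
  forall x y t, S x -> S y -> 0 <= t <= 1 -> S (t * x + (1 - t) * y).

Definition strictly_concave_on (S : R -> Prop) (f : R -> R) : Prop :=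
  forall x y t, S x -> S y -> x <> y -> 0 < t < 1 ->
    t * f x + (1 - t) * f y < f (t * x + (1 - t) * y).

From Stdlib Require Import Reals Lra.
Open Scope R_scope.

(* Where the inverse kinetic functions are defined they are rational:
   [psi_alpha_inv] is, both in [alpha] and in [d], a sum of terms
   [K / (u x + w)] with [K >= 0] and [u x + w > 0], hence convex, and the
   slices of [U] are its sublevel sets.  Since
   [v_in_star - psi_inv = alpha beta gamma (s_in - psi_alpha_inv)] and
   [f0_star = d (mu_max - d) (v_in_star - psi_inv) / (q_min mu_max)],
   [ln f0_star] is a sum of logarithms of positive concave functions; [ln d]
   is strictly concave, and in [alpha] the factor [v_in_star - psi_inv] is an
   affine function minus a strictly convex one. *)

Definition convex_on (S : R -> Prop) (f : R -> R) : Prop :=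
  forall x y t, S x -> S y -> 0 <= t <= 1 ->
    f (t * x + (1 - t) * y) <= t * f x + (1 - t) * f y.

Definition strictly_convex_on (S : R -> Prop) (f : R -> R) : Prop :=
  forall x y t, S x -> S y -> x <> y -> 0 < t < 1 ->
    f (t * x + (1 - t) * y) < t * f x + (1 - t) * f y.

Definition concave_on (S : R -> Prop) (f : R -> R) : Prop :=
  forall x y t, S x -> S y -> 0 <= t <= 1 ->
    t * f x + (1 - t) * f y <= f (t * x + (1 - t) * y).

Lemma convex_comb_pos x y t :
  0 < x -> 0 < y -> 0 <= t <= 1 -> 0 < t * x + (1 - t) * y.
Proof. intros; nra. Qed.

Lemma convex_comb_lt x y c t :
  x < c -> y < c -> 0 <= t <= 1 -> t * x + (1 - t) * y < c.
Proof.
  intros Hx Hy Ht.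
  assert (0 < t * (c - x) + (1 - t) * (c - y)) by (apply convex_comb_pos; lra).
  lra.
Qed.

Lemma convex_set_ext (S T : R -> Prop) :
  (forall x, S x <-> T x) -> convex_set S -> convex_set T.
Proof.
  intros HST HS x y t Hx Hy Ht; apply HST, HS; [apply HST, Hx | apply HST, Hy | exact Ht].
Qed.

Lemma convex_set_sublevel (S : R -> Prop) f c :
  convex_set S -> convex_on S f -> convex_set (fun x => S x /\ f x < c).
Proof.
  intros HS Hf x y t [Sx fx] [Sy fy] Ht; split; [now apply HS|].
  eapply Rle_lt_trans; [now apply Hf | now apply convex_comb_lt].
Qed.

Lemma convex_on_subset (S T : R -> Prop) f :
  (forall x, T x -> S x) -> convex_on S f -> convex_on T f.
Proof. intros HTS Hf x y t Hx Hy; apply Hf; auto. Qed.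

Lemma convex_on_ext (S : R -> Prop) f g :
  convex_set S -> (forall x, S x -> f x = g x) -> convex_on S f -> convex_on S g.
Proof.
  intros HS Hfg Hf x y t Hx Hy Ht.
  rewrite <- !Hfg by (try apply HS; assumption); now apply Hf.
Qed.

Lemma convex_on_plus (S : R -> Prop) f g :
  convex_on S f -> convex_on S g -> convex_on S (fun x => f x + g x).
Proof.
  intros Hf Hg x y t Hx Hy Ht.
  pose proof (Hf x y t Hx Hy Ht); pose proof (Hg x y t Hx Hy Ht); lra.
Qed.

Lemma convex_on_add_const (S : R -> Prop) f c :
  convex_on S f -> convex_on S (fun x => f x + c).
Proof. intros Hf x y t Hx Hy Ht; pose proof (Hf x y t Hx Hy Ht); lra. Qed.

Lemma convex_on_scale (S : R -> Prop) f c :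
  0 <= c -> convex_on S f -> convex_on S (fun x => c * f x).
Proof.
  intros Hc Hf x y t Hx Hy Ht.
  pose proof (Rmult_le_compat_l c _ _ Hc (Hf x y t Hx Hy Ht)); lra.
Qed.

Lemma inv_convex_gap w1 w2 t :
  0 < w1 -> 0 < w2 -> 0 <= t <= 1 ->
  t / w1 + (1 - t) / w2 - / (t * w1 + (1 - t) * w2)
  = t * (1 - t) * (w1 - w2) ^ 2 / (w1 * w2 * (t * w1 + (1 - t) * w2)).
Proof.
  intros H1 H2 Ht; pose proof (convex_comb_pos w1 w2 t H1 H2 Ht).
  field; lra.
Qed.

Lemma convex_on_inv_affine K u w :
  0 <= K -> convex_on (fun x => 0 < u * x + w) (fun x => K / (u * x + w)).
Proof.
  intros HK x y t Hx Hy Ht.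
  replace (u * (t * x + (1 - t) * y) + w) with (t * (u * x + w) + (1 - t) * (u * y + w))
    by ring.
  pose proof (inv_convex_gap _ _ t Hx Hy Ht) as Hgap.
  assert (0 <= t * (1 - t) * (u * x + w - (u * y + w)) ^ 2
                / ((u * x + w) * (u * y + w) * (t * (u * x + w) + (1 - t) * (u * y + w)))).
  { apply Rmult_le_pos; [apply Rmult_le_pos; [nra | apply pow2_ge_0] |].
    left; apply Rinv_0_lt_compat.
    pose proof (convex_comb_pos _ _ t Hx Hy Ht); apply Rmult_lt_0_compat; nra. }
  unfold Rdiv in *; nra.
Qed.

Lemma strictly_convex_on_inv_affine K u w :
  0 < K -> u <> 0 ->
  strictly_convex_on (fun x => 0 < u * x + w) (fun x => K / (u * x + w)).
Proof.
  intros HK Hu x y t Hx Hy Hxy Ht.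
  replace (u * (t * x + (1 - t) * y) + w) with (t * (u * x + w) + (1 - t) * (u * y + w))
    by ring.
  assert (Ht' : 0 <= t <= 1) by lra.
  pose proof (inv_convex_gap _ _ t Hx Hy Ht') as Hgap.
  assert (0 < t * (1 - t) * (u * x + w - (u * y + w)) ^ 2
                / ((u * x + w) * (u * y + w) * (t * (u * x + w) + (1 - t) * (u * y + w)))).
  { assert (Hsq : 0 < (u * x + w - (u * y + w)) ^ 2).
    { rewrite <- Rsqr_pow2; apply Rsqr_pos_lt.
      replace (u * x + w - (u * y + w)) with (u * (x - y)) by ring.
      apply Rmult_integral_contrapositive; split; lra. }
    apply Rdiv_lt_0_compat; [apply Rmult_lt_0_compat; [nra | exact Hsq] |].
    pose proof (convex_comb_pos _ _ t Hx Hy Ht'); apply Rmult_lt_0_compat; nra. }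
  unfold Rdiv in *; nra.
Qed.

Lemma concave_on_subset (S T : R -> Prop) f :
  (forall x, T x -> S x) -> concave_on S f -> concave_on T f.
Proof. intros HTS Hf x y t Hx Hy; apply Hf; auto. Qed.

Lemma concave_on_ext (S : R -> Prop) f g :
  convex_set S -> (forall x, S x -> f x = g x) -> concave_on S f -> concave_on S g.
Proof.
  intros HS Hfg Hf x y t Hx Hy Ht.
  rewrite <- !Hfg by (try apply HS; assumption); now apply Hf.
Qed.

Lemma concave_on_const (S : R -> Prop) c : concave_on S (fun _ => c).
Proof. intros x y t _ _ _; lra. Qed.

Lemma concave_on_affine (S : R -> Prop) u w : concave_on S (fun x => u * x + w).
Proof. intros x y t _ _ _; lra. Qed.

Lemma concave_on_plus (S : R -> Prop) f g :
  concave_on S f -> concave_on S g -> concave_on S (fun x => f x + g x).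
Proof.
  intros Hf Hg x y t Hx Hy Ht.
  pose proof (Hf x y t Hx Hy Ht); pose proof (Hg x y t Hx Hy Ht); lra.
Qed.

Lemma concave_on_const_sub (S : R -> Prop) f w :
  convex_on S f -> concave_on S (fun x => w - f x).
Proof. intros Hf x y t Hx Hy Ht; pose proof (Hf x y t Hx Hy Ht); lra. Qed.

Lemma strictly_concave_on_affine_sub (S : R -> Prop) f u w :
  strictly_convex_on S f -> strictly_concave_on S (fun x => u * x + w - f x).
Proof. intros Hf x y t Hx Hy Hxy Ht; pose proof (Hf x y t Hx Hy Hxy Ht); lra. Qed.

Lemma strictly_concave_on_subset (S T : R -> Prop) f :
  (forall x, T x -> S x) -> strictly_concave_on S f -> strictly_concave_on T f.
Proof. intros HTS Hf x y t Hx Hy; apply Hf; auto. Qed.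

Lemma strictly_concave_on_ext (S : R -> Prop) f g :
  convex_set S -> (forall x, S x -> f x = g x) ->
  strictly_concave_on S f -> strictly_concave_on S g.
Proof.
  intros HS Hfg Hf x y t Hx Hy Hxy Ht.
  rewrite <- !Hfg by (try apply HS; try assumption; lra); now apply Hf.
Qed.

Lemma strictly_concave_on_plus (S : R -> Prop) f g :
  strictly_concave_on S f -> concave_on S g ->
  strictly_concave_on S (fun x => f x + g x).
Proof.
  intros Hf Hg x y t Hx Hy Hxy Ht.
  pose proof (Hf x y t Hx Hy Hxy Ht); pose proof (Hg x y t Hx Hy ltac:(lra)); lra.
Qed.

Lemma ln_le_compat x y : 0 < x -> x <= y -> ln x <= ln y.
Proof. intros Hx [Hxy | <-]; [left; now apply ln_increasing | lra]. Qed.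

Lemma ln_sub_eq x m : 0 < x -> 0 < m -> ln x - ln m = ln (x / m).
Proof.
  intros Hx Hm; unfold Rdiv; rewrite ln_mult, ln_Rinv; try lra.
  now apply Rinv_0_lt_compat.
Qed.

Lemma exp_ln_sub x m : 0 < x -> 0 < m -> exp (ln x - ln m) = x / m.
Proof.
  intros Hx Hm.
  rewrite ln_sub_eq, exp_ln by (try apply Rdiv_lt_0_compat; assumption).
  reflexivity.
Qed.

Lemma ln_le_tangent x m : 0 < x -> 0 < m -> ln x <= ln m + (x - m) / m.
Proof.
  intros Hx Hm; pose proof (exp_ineq1_le (ln x - ln m)) as H.
  rewrite exp_ln_sub in H by assumption.
  replace ((x - m) / m) with (x / m - 1) by (field; lra); lra.
Qed.

Lemma ln_lt_tangent x m : 0 < x -> 0 < m -> x <> m -> ln x < ln m + (x - m) / m.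
Proof.
  intros Hx Hm Hxm.
  assert (Hne : ln x - ln m <> 0) by (intro E; apply Hxm, ln_inv; lra).
  pose proof (exp_ineq1 _ Hne) as H.
  rewrite exp_ln_sub in H by assumption.
  replace ((x - m) / m) with (x / m - 1) by (field; lra); lra.
Qed.

(* Both follow from the tangent line at the mean [m], whose weighted
   deviations [t (x - m) + (1 - t) (y - m)] cancel. *)
Lemma ln_concave : concave_on (fun x => 0 < x) ln.
Proof.
  intros x y t Hx Hy Ht.
  set (m := t * x + (1 - t) * y).
  assert (Hm : 0 < m) by (now apply convex_comb_pos).
  pose proof (Rmult_le_compat_l t _ _ (proj1 Ht) (ln_le_tangent x m Hx Hm)).
  pose proof (Rmult_le_compat_l (1 - t) _ _ ltac:(lra) (ln_le_tangent y m Hy Hm)).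
  assert (t * ((x - m) / m) + (1 - t) * ((y - m) / m) = 0) by (unfold m in *; field; lra).
  lra.
Qed.

Lemma ln_strictly_concave : strictly_concave_on (fun x => 0 < x) ln.
Proof.
  intros x y t Hx Hy Hxy Ht.
  set (m := t * x + (1 - t) * y).
  assert (Hm : 0 < m) by (apply convex_comb_pos; lra).
  assert (Hxm : x <> m).
  { intro E; apply Hxy; unfold m in E.
    apply (Rmult_eq_reg_l (1 - t)); [nra | lra]. }
  pose proof (Rmult_lt_compat_l t _ _ (proj1 Ht) (ln_lt_tangent x m Hx Hm Hxm)).
  pose proof (Rmult_le_compat_l (1 - t) _ _ ltac:(lra) (ln_le_tangent y m Hy Hm)).
  assert (t * ((x - m) / m) + (1 - t) * ((y - m) / m) = 0) by (unfold m in *; field; lra).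
  lra.
Qed.

Lemma concave_on_ln_comp (S : R -> Prop) f :
  convex_set S -> (forall x, S x -> 0 < f x) -> concave_on S f ->
  concave_on S (fun x => ln (f x)).
Proof.
  intros HS Hpos Hf x y t Hx Hy Ht.
  eapply Rle_trans; [apply ln_concave; auto |].
  apply ln_le_compat; [apply convex_comb_pos | apply Hf]; auto.
Qed.

Lemma strictly_concave_on_ln_comp (S : R -> Prop) f :
  convex_set S -> (forall x, S x -> 0 < f x) -> strictly_concave_on S f ->
  strictly_concave_on S (fun x => ln (f x)).
Proof.
  intros HS Hpos Hf x y t Hx Hy Hxy Ht.
  eapply Rle_lt_trans; [apply ln_concave; auto; lra |].
  apply ln_increasing; [apply convex_comb_pos; auto; lra | apply Hf; auto].
Qed.

Section Model.

Variable p : params.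
Hypotheses (gam_pos : 0 < gam p) (bet_pos : 0 < bet p) (phi_max_pos : 0 < phi_max p)
  (k_s_pos : 0 < k_s p) (rho_max_pos : 0 < rho_max p) (k_v_pos : 0 < k_v p)
  (q_min_pos : 0 < q_min p) (mu_max_pos : 0 < mu_max p).

Lemma psi_max_denom_pos : 0 < rho_max p + q_min p * mu_max p.
Proof. pose proof (Rmult_lt_0_compat _ _ q_min_pos mu_max_pos); lra. Qed.

Lemma psi_max_pos : 0 < psi_max p.
Proof.
  apply Rdiv_lt_0_compat; [apply Rmult_lt_0_compat; assumption | apply psi_max_denom_pos].
Qed.

Lemma psi_max_lt_mu_max : psi_max p < mu_max p.
Proof.
  pose proof psi_max_denom_pos as Hden.
  assert (E : mu_max p - psi_max p
              = q_min p * mu_max p * mu_max p / (rho_max p + q_min p * mu_max p))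
    by (unfold psi_max; field; lra).
  assert (0 < q_min p * mu_max p * mu_max p / (rho_max p + q_min p * mu_max p))
    by (apply Rdiv_lt_0_compat; [repeat apply Rmult_lt_0_compat | ]; assumption).
  lra.
Qed.

Definition psi_inv_coef : R :=
  k_v p * q_min p * mu_max p / (rho_max p + q_min p * mu_max p).

Lemma psi_inv_coef_pos : 0 < psi_inv_coef.
Proof.
  apply Rdiv_lt_0_compat;
    [repeat apply Rmult_lt_0_compat; assumption | apply psi_max_denom_pos].
Qed.

Lemma psi_inv_closed d :
  d < psi_max p -> psi_inv p d = psi_inv_coef * d / (psi_max p - d).
Proof.
  intros Hd.
  pose proof psi_max_denom_pos as Hden.
  assert (0 < mu_max p * rho_max p - d * (rho_max p + q_min p * mu_max p)).
  { assert (E : psi_max p * (rho_max p + q_min p * mu_max p) = mu_max p * rho_max p)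
      by (unfold psi_max; field; lra).
    pose proof (Rmult_lt_compat_r _ _ _ Hden Hd); lra. }
  pose proof psi_max_lt_mu_max.
  unfold psi_inv, rho_inv, mu_inv, psi_inv_coef, psi_max.
  field; repeat split; lra.
Qed.

Lemma phi_inv_closed a d :
  a < 1 -> d < (1 - a) * phi_max p ->
  phi_inv p (d / (1 - a)) = k_s p * d / ((1 - a) * phi_max p - d).
Proof. intros Ha Hd; unfold phi_inv; field; lra. Qed.

(* The region where [phi^{-1} (d / (1 - alpha))] and [psi^{-1} d] make sense. *)
Definition in_dom (a d : R) : Prop :=
  0 < a < 1 /\ 0 < d /\ d < (1 - a) * phi_max p /\ d < psi_max p.

Lemma in_U_iff a d : in_U p a d <-> in_dom a d /\ psi_alpha_inv p a d < s_in p.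
Proof.
  unfold in_U, in_D, in_dom; split.
  - intros (Ha & Hd & Hmin & Hs).
    pose proof (Rmin_l ((1 - a) * phi_max p) (psi_max p)).
    pose proof (Rmin_r ((1 - a) * phi_max p) (psi_max p)).
    repeat split; lra.
  - intros ((Ha & Hd & Hphi & Hpsi) & Hs).
    repeat split; try lra; now apply Rmin_glb_lt.
Qed.

Lemma in_U_in_dom a d : in_U p a d -> in_dom a d.
Proof. intros H; now apply in_U_iff in H. Qed.

Lemma in_dom_convex_d a : convex_set (fun d => in_dom a d).
Proof.
  intros x y t (Ha & Hx & Hxphi & Hxpsi) (_ & Hy & Hyphi & Hypsi) Ht.
  repeat split; try lra; [now apply convex_comb_pos | now apply convex_comb_lt ..].
Qed.

Lemma in_dom_convex_a d : convex_set (fun a => in_dom a d).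
Proof.
  intros x y t (Hx & Hd & Hxphi & Hpsi) (Hy & _ & Hyphi & _) Ht.
  assert (0 < t * ((1 - x) * phi_max p - d) + (1 - t) * ((1 - y) * phi_max p - d))
    by (apply convex_comb_pos; lra).
  repeat split; try lra; [apply convex_comb_pos | apply convex_comb_lt]; lra.
Qed.

Lemma psi_alpha_inv_closed_d a d :
  in_dom a d ->
  psi_alpha_inv p a d =
    k_s p * ((1 - a) * phi_max p) / (-1 * d + (1 - a) * phi_max p)
    + psi_inv_coef * psi_max p / (a * bet p * gam p) / (-1 * d + psi_max p)
    + - (k_s p + psi_inv_coef / (a * bet p * gam p)).
Proof.
  intros (Ha & Hd & Hphi & Hpsi).
  unfold psi_alpha_inv; rewrite phi_inv_closed, psi_inv_closed by lra.
  field; repeat split; lra.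
Qed.

Lemma psi_alpha_inv_closed_a a d :
  in_dom a d ->
  psi_alpha_inv p a d =
    k_s p * d / (- phi_max p * a + (phi_max p - d))
    + psi_inv_coef * d / (psi_max p - d) / (bet p * gam p * a + 0).
Proof.
  intros (Ha & Hd & Hphi & Hpsi).
  unfold psi_alpha_inv; rewrite phi_inv_closed, psi_inv_closed by lra.
  field; repeat split; nra.
Qed.

Lemma psi_alpha_inv_convex_d a :
  0 < a < 1 -> convex_on (fun d => in_dom a d) (psi_alpha_inv p a).
Proof.
  intros Ha.
  assert (Hu : 0 < a * bet p * gam p) by (repeat apply Rmult_lt_0_compat; lra).
  pose proof psi_inv_coef_pos; pose proof psi_max_pos.
  eapply convex_on_ext;
    [apply in_dom_convex_d | intros d Hd; symmetry; now apply psi_alpha_inv_closed_d |].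
  apply convex_on_add_const, convex_on_plus;
    eapply convex_on_subset; try apply convex_on_inv_affine.
  - intros d (_ & _ & Hphi & _); lra.
  - left; apply Rmult_lt_0_compat; nra.
  - intros d (_ & _ & _ & Hpsi); lra.
  - left; apply Rdiv_lt_0_compat; [nra | exact Hu].
Qed.

Lemma psi_alpha_inv_convex_a d :
  0 < d < psi_max p -> convex_on (fun a => in_dom a d) (fun a => psi_alpha_inv p a d).
Proof.
  intros Hd; pose proof psi_inv_coef_pos.
  eapply convex_on_ext;
    [apply in_dom_convex_a | intros a Ha; symmetry; now apply psi_alpha_inv_closed_a |].
  apply convex_on_plus; eapply convex_on_subset; try apply convex_on_inv_affine.
  - intros a (_ & _ & Hphi & _); lra.
  - left; nra.
  - intros a ((Ha & _) & _); rewrite Rplus_0_r; repeat apply Rmult_lt_0_compat; lra.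
  - left; apply Rdiv_lt_0_compat; nra.
Qed.

Lemma in_U_convex_d a : convex_set (fun d => in_U p a d).
Proof.
  intros x y t Hx; destruct (in_U_in_dom _ _ Hx) as [Ha _]; revert x y t Hx.
  apply (convex_set_ext (fun d => in_dom a d /\ psi_alpha_inv p a d < s_in p)).
  - intros d; symmetry; apply in_U_iff.
  - apply convex_set_sublevel; [apply in_dom_convex_d | now apply psi_alpha_inv_convex_d].
Qed.

Lemma in_U_convex_a d : convex_set (fun a => in_U p a d).
Proof.
  intros x y t Hx; destruct (in_U_in_dom _ _ Hx) as (_ & Hd & _ & Hpsi); revert x y t Hx.
  apply (convex_set_ext (fun a => in_dom a d /\ psi_alpha_inv p a d < s_in p)).
  - intros a; symmetry; apply in_U_iff.
  - apply convex_set_sublevel; [apply in_dom_convex_a | now apply psi_alpha_inv_convex_a].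
Qed.

Definition inflow_margin (a d : R) : R := v_in_star p a d - psi_inv p d.

Lemma inflow_margin_eq a d :
  a <> 0 -> inflow_margin a d = a * bet p * gam p * (s_in p - psi_alpha_inv p a d).
Proof.
  intros Ha; unfold inflow_margin, v_in_star, psi_alpha_inv.
  field; repeat split; lra.
Qed.

Lemma inflow_margin_pos a d : in_U p a d -> 0 < inflow_margin a d.
Proof.
  intros HU; apply in_U_iff in HU as ((Ha & _) & Hs).
  rewrite inflow_margin_eq by lra.
  repeat apply Rmult_lt_0_compat; lra.
Qed.

Lemma f0_star_factor a d :
  in_dom a d ->
  f0_star p a d = d * (mu_max p - d) * inflow_margin a d / (q_min p * mu_max p).
Proof.
  intros (_ & _ & _ & Hpsi); pose proof psi_max_lt_mu_max.
  unfold f0_star, mu_inv, inflow_margin; field; repeat split; lra.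
Qed.

Lemma f0_star_pos a d : in_U p a d -> 0 < f0_star p a d.
Proof.
  intros HU; pose proof (inflow_margin_pos _ _ HU); pose proof psi_max_lt_mu_max.
  pose proof (in_U_in_dom _ _ HU) as Hdom.
  rewrite f0_star_factor by exact Hdom; destruct Hdom as (_ & Hd & _ & Hpsi).
  apply Rdiv_lt_0_compat; repeat apply Rmult_lt_0_compat; lra.
Qed.

Lemma ln_f0_star a d :
  in_U p a d ->
  ln (f0_star p a d)
  = ln d + ln (mu_max p - d) + ln (inflow_margin a d) - ln (q_min p * mu_max p).
Proof.
  intros HU; pose proof (inflow_margin_pos _ _ HU); pose proof psi_max_lt_mu_max.
  pose proof (in_U_in_dom _ _ HU) as Hdom.
  rewrite f0_star_factor by exact Hdom; destruct Hdom as (_ & Hd & _ & Hpsi).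
  rewrite <- ln_sub_eq, !ln_mult; try lra;
    repeat apply Rmult_lt_0_compat; lra.
Qed.

Lemma inflow_margin_concave_d a :
  0 < a < 1 -> concave_on (fun d => in_dom a d) (inflow_margin a).
Proof.
  intros Ha.
  apply concave_on_ext with
    (f := fun d => a * bet p * gam p * s_in p - a * bet p * gam p * psi_alpha_inv p a d).
  - apply in_dom_convex_d.
  - intros d _; rewrite inflow_margin_eq by lra; ring.
  - apply concave_on_const_sub, convex_on_scale; [| now apply psi_alpha_inv_convex_d].
    left; repeat apply Rmult_lt_0_compat; lra.
Qed.

Lemma inflow_margin_closed_a a d :
  in_dom a d ->
  inflow_margin a d =
    bet p * gam p * s_in p * a
    + (bet p * gam p * k_s p * d / phi_max p - psi_inv_coef * d / (psi_max p - d))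
    - bet p * gam p * k_s p * d * (phi_max p - d) / phi_max p
      / (- phi_max p * a + (phi_max p - d)).
Proof.
  intros (Ha & Hd & Hphi & Hpsi).
  unfold inflow_margin, v_in_star; rewrite phi_inv_closed, psi_inv_closed by lra.
  field; repeat split; lra.
Qed.

Lemma inflow_margin_strictly_concave_a d :
  0 < d -> d < phi_max p -> d < psi_max p ->
  strictly_concave_on (fun a => in_dom a d) (fun a => inflow_margin a d).
Proof.
  intros Hd Hphi Hpsi.
  eapply strictly_concave_on_ext;
    [apply in_dom_convex_a | intros a Ha; symmetry; now apply inflow_margin_closed_a |].
  apply strictly_concave_on_affine_sub.
  intros x y t Hx Hy.
  apply strictly_convex_on_inv_affine; try lra;
    [| destruct Hx as (_ & _ & Hx & _) | destruct Hy as (_ & _ & Hy & _)]; try nra.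
  apply Rdiv_lt_0_compat; [| exact phi_max_pos].
  repeat apply Rmult_lt_0_compat; lra.
Qed.

Lemma ln_f0_star_strictly_concave_d a :
  strictly_concave_on (fun d => in_U p a d) (fun d => ln (f0_star p a d)).
Proof.
  intros x y t Hx; destruct (in_U_in_dom _ _ Hx) as [Ha _]; revert x y t Hx.
  pose proof psi_max_lt_mu_max.
  apply strictly_concave_on_ext with
    (f := fun d => ln d + (ln (mu_max p - d)
                          + (ln (inflow_margin a d) + - ln (q_min p * mu_max p)))).
  - apply in_U_convex_d.
  - intros d Hd; rewrite ln_f0_star by exact Hd; ring.
  - apply strictly_concave_on_plus; [| apply concave_on_plus; [| apply concave_on_plus]].
    + apply strictly_concave_on_subset with (S := fun d => 0 < d);
        [intros d Hd; apply in_U_in_dom in Hd; apply Hd | apply ln_strictly_concave].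
    + apply concave_on_ln_comp; [apply in_U_convex_d | |].
      * intros d Hd; apply in_U_in_dom in Hd; destruct Hd as (_ & _ & _ & Hd); lra.
      * apply concave_on_ext with (f := fun d => -1 * d + mu_max p);
          [apply in_U_convex_d | intros d _; ring | apply concave_on_affine].
    + apply concave_on_ln_comp; [apply in_U_convex_d | apply inflow_margin_pos |].
      apply concave_on_subset with (S := fun d => in_dom a d);
        [apply in_U_in_dom | now apply inflow_margin_concave_d].
    + apply concave_on_const.
Qed.

Lemma ln_f0_star_strictly_concave_a d :
  strictly_concave_on (fun a => in_U p a d) (fun a => ln (f0_star p a d)).
Proof.
  intros x y t Hx; destruct (in_U_in_dom _ _ Hx) as (Hx01 & Hd & Hphi & Hpsi).
  assert (Hdphi : d < phi_max p) by nra.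
  clear Hx01 Hphi; revert x y t Hx.
  apply strictly_concave_on_ext with
    (f := fun a => ln (inflow_margin a d)
                   + (ln d + ln (mu_max p - d) - ln (q_min p * mu_max p))).
  - apply in_U_convex_a.
  - intros a Ha; rewrite ln_f0_star by exact Ha; ring.
  - apply strictly_concave_on_plus; [| apply concave_on_const].
    apply strictly_concave_on_ln_comp;
      [apply in_U_convex_a | intros a Ha; now apply inflow_margin_pos |].
    apply strictly_concave_on_subset with (S := fun a => in_dom a d);
      [intros a; apply in_U_in_dom | now apply inflow_margin_strictly_concave_a].
Qed.

End Model.

Theorem proposition1 (p : params) (Hp : params_pos p) :
  (forall a : R, convex_set (fun d => in_U p a d)) /\
  (forall d : R, convex_set (fun a => in_U p a d)) /\
  (forall a d : R, in_U p a d -> 0 < f0_star p a d) /\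
  (forall a : R, strictly_concave_on (fun d => in_U p a d) (fun d => ln (f0_star p a d))) /\
  (forall d : R, strictly_concave_on (fun a => in_U p a d) (fun a => ln (f0_star p a d))).
Proof.
  destruct Hp as (_ & Hgam & Hbet & Hphi & Hks & Hrho & Hkv & Hq & Hmu).
  split; [| split; [| split; [| split]]].
  - intro a; now apply in_U_convex_d.
  - intro d; now apply in_U_convex_a.
  - intros a d; now apply f0_star_pos.
  - intro a; now apply ln_f0_star_strictly_concave_d.
  - intro d; now apply ln_f0_star_strictly_concave_a.
Qed.
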